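(* Let $G_1$ and $G_2$ be non-empty graphs and $u\in V(G_1)$. Then $\mathrm{tww}(G_1(u\leftarrow G_2))=\max(\mathrm{tww}(G_1),\mathrm{tww}(G_2))$.
   Context: $G_1(u\leftarrow G_2)$ denotes the graph obtained from the disjoint union of $G_1-u$ and $G_2$ by making every vertex of $V(G_1)\setminus\{u\}$ that was adjacent to $u$ in $G_1$ adjacent to all vertices of $V(G_2)$. A trigraph $H$ consists of a vertex set $V(H)$ and two disjoint sets of unordered pairs of distinct vertices: black edges $E(H)$ and red edges $R(H)$. Two vertices are adjacent (neighbors) if they are joined by a black or a red edge. The red graph of $H$ is the graph $(V(H),R(H))$; $H$ is a $d$-trigraph if its red graph has maximum degree at most $d$. A graph is a trigraph with no red edges. Contracting two distinct vertices $u,v$ of a trigraph $H$ yields the trigraph obtained by deleting $u$ and $v$ and adding a new vertex $z$ such that, for every other vertex $x$: $zx$ is a black edge if both $ux$ and $vx$ are black edges; $zx$ is not an edge if $x$ is adjacent to neither $u$ nor $v$; and $zx$ is a red edge otherwise. All edges not incident to $u$ or $v$ are unchanged. A $d$-sequence of an $n$-vertex graph $G$ is a sequence of $d$-trigraphs $G=G_n,G_{n-1},\dots,G_1$ such that $G_1$ has a single vertex and each $G_{i-1}$ is obtained from $G_i$ by one contraction (so $G_i$ has $i$ vertices). The twin-width $\mathrm{tww}(G)$ of $G$ is the minimum $d$ such that $G$ admits a $d$-sequence. *)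

From Stdlib Require Import ClassicalEpsilon.
From mathcomp Require Import all_boot.
Set Implicit Arguments. Unset Strict Implicit. Unset Printing Implicit Defensive.

Record graph := Graph {
  gV : finType;
  gadj : rel gV;
  gsym : symmetric gadj;
  girr : irreflexive gadj }.

Section Subst.
Variables (G1 G2 : graph) (u : gV G1).

Definition subst_vert : finType := ({x : gV G1 | x != u} + gV G2)%type.

Definition subst_adj : rel subst_vert := fun a b =>
  match a, b with
  | inl x, inl y => gadj (val x) (val y)
  | inr x, inr y => gadj x y
  | inl x, inr _ => gadj (val x) u
  | inr _, inl y => gadj u (val y)
  end.

Lemma subst_sym : symmetric subst_adj.
Proof. by case=> x [] y //=; rewrite gsym. Qed.

Lemma subst_irr : irreflexive subst_adj.
Proof. by case=> x /=; rewrite girr. Qed.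

Definition subst_graph : graph := Graph subst_sym subst_irr.
End Subst.

(* A trigraph whose vertices are a finite set of names from a universe T;
   black / red edges are symmetric boolean relations (only their values on
   pairs of vertices of tverts matter). *)
Record trigraph (T : finType) := Trigraph {
  tverts : {set T};
  tblack : T -> T -> bool;
  tred : T -> T -> bool }.

Section Trigraphs.
Variable T : finType.
Implicit Types (H : trigraph T).

Definition tadj H x y := tblack H x y || tred H x y.

Definition red_deg H x : nat := #|[set y in tverts H | tred H x y]|.

Definition is_d_trigraph (d : nat) H : Prop :=
  forall x, x \in tverts H -> red_deg H x <= d.

(* Contraction of u and v in H, the new vertex being named z
   (z must not be one of the remaining vertices V(H) \ {u,v}). *)
Definition contract H (u v z : T) : trigraph T :=
  let W := tverts H :\ u :\ v in
  Trigraph (z |: W)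
    (fun x y =>
       if x == z then (y \in W) && tblack H u y && tblack H v y
       else if y == z then (x \in W) && tblack H u x && tblack H v x
       else (x \in W) && (y \in W) && tblack H x y)
    (fun x y =>
       if x == z then (y \in W) && (tadj H u y || tadj H v y)
                       && ~~ (tblack H u y && tblack H v y)
       else if y == z then (x \in W) && (tadj H u x || tadj H v x)
                       && ~~ (tblack H u x && tblack H v x)
       else (x \in W) && (y \in W) && tred H x y).

(* [contraction_seq d H s]: starting from H (assumed to be a d-trigraph),
   performing the contractions listed in s (triples (u, v, z): contract the
   distinct vertices u, v into a new vertex z) yields only d-trigraphs and
   ends with a single-vertex trigraph. *)
Fixpoint contraction_seq (d : nat) H (s : seq (T * T * T)) : Prop :=
  match s with
  | [::] => #|tverts H| = 1
  | (u, v, z) :: s' =>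
      [/\ u \in tverts H, v \in tverts H, u != v,
          z \notin tverts H :\ u :\ v
        & is_d_trigraph d (contract H u v z) /\
          contraction_seq d (contract H u v z) s']
  end.
End Trigraphs.

Definition graph_trigraph (G : graph) : trigraph (gV G) :=
  Trigraph [set: gV G] (gadj (g:=G)) (fun _ _ => false).

Definition has_dseq (G : graph) (d : nat) : Prop :=
  is_d_trigraph d (graph_trigraph G) /\
  exists s, contraction_seq d (graph_trigraph G) s.

Definition has_dseqb (G : graph) (d : nat) : bool :=
  if excluded_middle_informative (has_dseq G d) then true else false.

Lemma has_dseqb_ex (G : graph) :
  (exists d, has_dseq G d) -> exists d, has_dseqb G d.
Proof.
case=> d Hd; exists d; rewrite /has_dseqb.
by case: excluded_middle_informative.
Qed.

(* Twin-width: the minimum d such that G admits a d-sequence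
   (every non-empty graph admits one; default 0 otherwise). *)
Definition tww (G : graph) : nat :=
  match excluded_middle_informative (exists d, has_dseq G d) with
  | left H => ex_minn (has_dseqb_ex H)
  | right _ => 0
  end.

From Stdlib Require Import ClassicalEpsilon.
From mathcomp Require Import all_boot.
Set Implicit Arguments. Unset Strict Implicit. Unset Printing Implicit Defensive.

(* Every trigraph met along a contraction sequence of a graph G is the
   quotient of G by a partition of V(G): its vertices are the parts, a black
   edge joins two parts that are fully adjacent, a red edge joins two parts
   that are "mixed" (some but not all pairs adjacent).  Contracting two
   vertices merges the corresponding parts.
   The lower bound follows since G1 and G2 are induced subgraphs of
   G1(u <- G2); the upper bound contracts first the copy of G2 (the other
   vertices being inert), and then the resulting copy of G1. *)

Section Adjacency.
Variable G : graph.
Implicit Types A B C : {set gV G}.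

Definition fully_adj A B :=
  [forall a, forall b, (a \in A) ==> (b \in B) ==> gadj a b].

Definition some_adj A B :=
  [exists a, exists b, [&& a \in A, b \in B & gadj a b]].

Definition mixed A B := some_adj A B && ~~ fully_adj A B.

Lemma fully_adjP A B :
  reflect (forall a b, a \in A -> b \in B -> gadj a b) (fully_adj A B).
Proof.
apply: (iffP forallP) => [h a b ha hb|h a].
  by have /forallP/(_ b) := h a; rewrite ha hb.
by apply/forallP => b; apply/implyP => ha; apply/implyP => hb; apply: h.
Qed.

Lemma some_adjP A B :
  reflect (exists a b, [/\ a \in A, b \in B & gadj a b]) (some_adj A B).
Proof.
apply: (iffP existsP) => [[a /existsP [b /and3P [h1 h2 h3]]]|[a [b [h1 h2 h3]]]].
  by exists a, b.
by exists a; apply/existsP; exists b; rewrite h1 h2 h3.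
Qed.

Lemma fully_adjC A B : fully_adj A B = fully_adj B A.
Proof. by apply/fully_adjP/fully_adjP => h a b ha hb; rewrite gsym; apply: h. Qed.

Lemma some_adjC A B : some_adj A B = some_adj B A.
Proof.
by apply/some_adjP/some_adjP => -[a [b [h1 h2 h3]]]; exists b, a; rewrite gsym.
Qed.

Lemma mixedC A B : mixed A B = mixed B A.
Proof. by rewrite /mixed fully_adjC some_adjC. Qed.

Lemma fully_adjUl A B C : fully_adj (A :|: B) C = fully_adj A C && fully_adj B C.
Proof.
apply/fully_adjP/andP => [h|[/fully_adjP h1 /fully_adjP h2] a b].
  by split; apply/fully_adjP => a b ha hb; apply: h => //; rewrite inE ha ?orbT.
by rewrite inE => /orP [] ha hb; [apply: h1|apply: h2].
Qed.

Lemma some_adjUl A B C : some_adj (A :|: B) C = some_adj A C || some_adj B C.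
Proof.
apply/some_adjP/orP => [[a [b [+ h2 h3]]]|[] /some_adjP [a [b [h1 h2 h3]]]].
- by rewrite inE => /orP [] h1; [left|right]; apply/some_adjP; exists a, b.
- by exists a, b; rewrite inE h1.
- by exists a, b; rewrite inE h1 orbT.
Qed.

Lemma fully_some_adj A B :
  A != set0 -> B != set0 -> fully_adj A B -> some_adj A B.
Proof.
case/set0Pn => a ha /set0Pn [b hb] /fully_adjP h.
by apply/some_adjP; exists a, b; split => //; apply: h.
Qed.

Lemma fully_adj1 a b : fully_adj [set a] [set b] = gadj a b.
Proof.
apply/fully_adjP/idP => [h|h x y]; first by apply: h; rewrite inE.
by rewrite !inE => /eqP -> /eqP ->.
Qed.

Lemma mixed1 a b : mixed [set a] [set b] = false.
Proof.
rewrite /mixed fully_adj1; case: (boolP (gadj a b)) => hab; first by rewrite andbF.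
rewrite andbT; apply/negbTE/negP => /some_adjP [x [y []]]; rewrite !inE => /eqP -> /eqP ->.
by rewrite (negbTE hab).
Qed.

End Adjacency.

Lemma disjoint_setUl (T : finType) (A B C : {set T}) :
  [disjoint A :|: B & C] = [disjoint A & C] && [disjoint B & C].
Proof. by rewrite -!setI_eq0 setIUl setU_eq0. Qed.

Section Quotient.
Variables (G : graph) (T : finType).
Implicit Types (H : trigraph T) (p : T -> {set gV G}).

(* H is the quotient of G by the partition {p x | x in V(H)}: the parts are
   non-empty, disjoint and cover V(G); black edges join fully adjacent parts,
   red edges join mixed parts, and there are no red loops. *)
Definition is_quotient H p : Prop :=
  [/\ forall x, x \in tverts H -> p x != set0,
      forall x y, x \in tverts H -> y \in tverts H -> x != y ->
        [disjoint p x & p y],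
      forall v, exists2 x, x \in tverts H & v \in p x,
      forall x y, x \in tverts H -> y \in tverts H -> x != y ->
        tblack H x y = fully_adj (p x) (p y) /\ tred H x y = mixed (p x) (p y)
    & forall x, tred H x x = false].

Definition merge_parts p (u v z : T) : T -> {set gV G} :=
  fun x => if x == z then p u :|: p v else p x.

Lemma tadj_quotient H p x y : is_quotient H p ->
  x \in tverts H -> y \in tverts H -> x != y ->
  tadj H x y = some_adj (p x) (p y).
Proof.
case=> hne _ _ hedge _ hx hy xy; rewrite /tadj; have [-> ->] := hedge _ _ hx hy xy.
rewrite /mixed; case: (boolP (fully_adj _ _)) => h /=; last by rewrite andbT.
by rewrite (fully_some_adj (hne _ hx) (hne _ hy) h).
Qed.

Section Contraction.
Variables (H : trigraph T) (p : T -> {set gV G}) (u v z : T).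
Hypotheses (hH : is_quotient H p) (hu : u \in tverts H) (hv : v \in tverts H).
Hypothesis hz : z \notin tverts H :\ u :\ v.
Let W := tverts H :\ u :\ v.

Lemma mem_contract_rest x : x \in W -> [/\ x \in tverts H, x != u, x != v & x != z].
Proof.
move=> hx; have xz : x != z by apply: contraNneq hz => <-.
by move: hx; rewrite !inE => /and3P [-> -> ->].
Qed.

Lemma merged_edge y : y \in W ->
  tblack H u y && tblack H v y = fully_adj (p u :|: p v) (p y) /\
  (tadj H u y || tadj H v y) && ~~ (tblack H u y && tblack H v y)
    = mixed (p u :|: p v) (p y).
Proof.
case/mem_contract_rest => hy yu yv _.
have uy : u != y by rewrite eq_sym.
have vy : v != y by rewrite eq_sym.
rewrite (tadj_quotient hH hu hy uy) (tadj_quotient hH hv hy vy).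
case: (hH) => _ _ _ hedge _.
have [-> _] := hedge _ _ hu hy uy; have [-> _] := hedge _ _ hv hy vy.
by rewrite /mixed fully_adjUl some_adjUl.
Qed.

Lemma contract_quotient : is_quotient (contract H u v z) (merge_parts p u v z).
Proof.
have [hne hdis hcov hedge hloop] := hH; rewrite /merge_parts.
split => /=.
- move=> x; rewrite in_setU1; case: eqP => [_ _|_ /= /mem_contract_rest [hx _ _ _]].
    by have /set0Pn [a ha] := hne _ hu; apply/set0Pn; exists a; rewrite inE ha.
  exact: hne.
- move=> x y; rewrite !in_setU1.
  case: (eqP (x:=x)) => [->|xz] /=; case: (eqP (x:=y)) => [->|yz] //=;
    try by move=> _ _; rewrite eqxx.
  + move=> _ /mem_contract_rest [hy yu yv _] _.
    by rewrite disjoint_setUl !hdis // eq_sym.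
  + move=> /mem_contract_rest [hx xu xv _] _ _.
    by rewrite disjoint_sym disjoint_setUl !(disjoint_sym _ (p x)) !hdis.
  + by move=> /mem_contract_rest [hx _ _ _] /mem_contract_rest [hy _ _ _]; apply: hdis.
- move=> w; have [x hx hwx] := hcov w.
  case: (boolP (x \in W)) => xW.
    have [_ _ _ xz] := mem_contract_rest xW.
    by exists x; rewrite ?in_setU1 ?xW ?orbT // (negbTE xz).
  exists z; rewrite ?in_setU1 ?eqxx //.
  move: xW; rewrite !inE hx andbT negb_and !negbK.
  by case/orP => /eqP <-; rewrite hwx ?orbT.
- move=> x y; rewrite !in_setU1.
  case: (eqP (x:=x)) => [->|xz] /=; case: (eqP (x:=y)) => [->|yz] //=;
    try by move=> _ _; rewrite eqxx.
  + by move=> _ yW _; rewrite yW; apply: merged_edge.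
  + move=> xW _ _; rewrite xW fully_adjC mixedC; exact: merged_edge.
  + move=> xW yW xy; rewrite xW yW /=.
    by apply: hedge => //; [case: (mem_contract_rest xW)|case: (mem_contract_rest yW)].
- move=> x; case: eqP => [->|_]; first by rewrite (negbTE hz).
  by rewrite hloop !andbF.
Qed.

End Contraction.
End Quotient.

Lemma graph_quotient (G : graph) :
  is_quotient (graph_trigraph G) (fun x => [set x]).
Proof.
split => //=.
- by move=> x _; apply/set0Pn; exists x; rewrite inE.
- by move=> x y _ _ xy; rewrite disjoints1 inE.
- by move=> v; exists v; rewrite ?inE.
- by move=> x y _ _ _; rewrite fully_adj1 mixed1.
Qed.

Section Sequences.
Variable T : finType.
Implicit Types (H K : trigraph T) (s : seq (T * T * T)).

Fixpoint reaches (d : nat) H K s : Prop :=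
  match s with
  | [::] => K = H
  | (a, b, c) :: s' =>
      [/\ a \in tverts H, b \in tverts H, a != b,
          c \notin tverts H :\ a :\ b
        & is_d_trigraph d (contract H a b c) /\
          reaches d (contract H a b c) K s']
  end.

Lemma contraction_seq_cat d H K s s' :
  reaches d H K s -> contraction_seq d K s' -> contraction_seq d H (s ++ s').
Proof.
elim: s H => [|[[a b] c] s IH] H /=; first by move=> ->.
by case=> ha hb ab hc [hd hs] hs'; split => //; split => //; apply: IH hs hs'.
Qed.

Lemma contraction_seq_mono d d' H s :
  d <= d' -> contraction_seq d H s -> contraction_seq d' H s.
Proof.
move=> dd'; elim: s H => [|[[a b] c] s IH] H //=.
case=> ha hb ab hc [hd hs]; split => //; split; last exact: IH.
by move=> x hx; apply: leq_trans (hd _ hx) dd'.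
Qed.

Lemma contraction_seq_card n H :
  #|tverts H| = n.+1 -> exists s, contraction_seq #|T| H s.
Proof.
elim: n H => [|n IH] H hn; first by exists [::].
have /card_gt0P [a ha] : 0 < #|tverts H| by rewrite hn.
have : 0 < #|tverts H :\ a| by move: hn; rewrite (cardsD1 a) ha add1n => [[->]].
case/card_gt0P => b; rewrite in_setD1 => /andP [ba hb].
have hc : a \notin tverts H :\ a :\ b by rewrite !inE eqxx andbF.
have hcard : #|tverts (contract H a b a)| = n.+1.
  rewrite /= cardsU1 hc add1n; move: hn; rewrite (cardsD1 a) ha add1n => [[]].
  by rewrite (cardsD1 b) in_setD1 ba hb add1n => [[->]].
have [s hs] := IH _ hcard.
exists ((a, b, a) :: s) => /=; split; rewrite 1?eq_sym //; split => // x _.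
by rewrite /red_deg max_card.
Qed.

End Sequences.

Lemma graph_dtrigraph (G : graph) d : is_d_trigraph d (graph_trigraph G).
Proof.
move=> x _; rewrite /red_deg /=.
suff -> : [set y in [set: gV G] | false] = set0 by rewrite cards0.
by apply/setP => y; rewrite !inE andbF.
Qed.

Lemma has_dseq_mono (G : graph) d d' : d <= d' -> has_dseq G d -> has_dseq G d'.
Proof.
move=> dd' [_ [s hs]]; split; first exact: graph_dtrigraph.
by exists s; apply: contraction_seq_mono hs.
Qed.

Lemma has_dseq_exists (G : graph) : 0 < #|gV G| -> exists d, has_dseq G d.
Proof.
move=> hG; exists #|gV G|; split; first exact: graph_dtrigraph.
by apply: (contraction_seq_card (n := #|gV G|.-1)); rewrite /= cardsT prednK.
Qed.

Lemma twwP (G : graph) : 0 < #|gV G| ->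
  has_dseq G (tww G) /\ forall d, has_dseq G d -> tww G <= d.
Proof.
move/has_dseq_exists => hex; rewrite /tww; case: excluded_middle_informative => // h.
case: ex_minnP => m hm hmin; split.
  by move: hm; rewrite /has_dseqb; case: excluded_middle_informative.
by move=> d hd; apply: hmin; rewrite /has_dseqb; case: excluded_middle_informative.
Qed.

(* Transfer to an induced subgraph G' of G, embedded by f. *)
Section InducedSubgraph.
Variables (G G' : graph) (f : gV G' -> gV G).
Hypothesis f_adj : forall a b, gadj (f a) (f b) = gadj a b.
Variables (T T' : finType).

Definition trace (H : trigraph T) p (H' : trigraph T') p' (g : T' -> T) :=
  [/\ @is_quotient G T H p, @is_quotient G' T' H' p' &
      forall x, x \in tverts H' -> g x \in tverts H /\ p' x = f @^-1: p (g x)].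

(* As f preserves adjacency, parts with mixed traces are mixed. *)
Lemma mixed_preimset (P Q : {set gV G}) :
  mixed (f @^-1: P) (f @^-1: Q) -> mixed P Q.
Proof.
case/andP => /some_adjP [a [b []]]; rewrite !inE => ha hb hab /fully_adjP nall.
apply/andP; split; first by apply/some_adjP; exists (f a), (f b); rewrite f_adj.
apply/fully_adjP => hall; apply: nall => x y; rewrite !inE -f_adj; exact: hall.
Qed.

Definition redirect (g : T' -> T) (a b c : T) : T' -> T :=
  fun x => if (g x == a) || (g x == b) then c else g x.

Section TraceFacts.
Variables (H : trigraph T) (p : T -> {set gV G}).
Variables (H' : trigraph T') (p' : T' -> {set gV G'}) (g : T' -> T).
Hypothesis htr : trace H p H' p' g.

Lemma trace_inj : {in tverts H' &, injective g}.
Proof.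
case: htr => _ [hne hdis _ _ _] hg x y hx hy gxy; apply/eqP/negPn/negP => xy.
have := hdis _ _ hx hy xy; rewrite (proj2 (hg _ hx)) gxy -(proj2 (hg _ hy)).
by rewrite -setI_eq0 setIid => /eqP e; move: (hne _ hy); rewrite e eqxx.
Qed.

Lemma trace_red_deg x : x \in tverts H' -> red_deg H' x <= red_deg H (g x).
Proof.
move=> hx; case: htr => [[_ _ _ hedge _] [_ _ _ hedge' hloop'] hg].
rewrite /red_deg -(card_in_imset (f:=g)); last first.
  by move=> a b; rewrite !inE => /andP [ha _] /andP [hb _]; apply: trace_inj.
apply: subset_leq_card; apply/subsetP => _ /imsetP [y + ->].
rewrite inE => /andP [hy hxy].
have xy : x != y by apply: contraTneq hxy => ->; rewrite hloop'.
have gxy : g x != g y by apply: contra xy => /eqP /trace_inj ->.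
rewrite inE (proj1 (hg _ hy)) /=.
have [_ ->] := hedge _ _ (proj1 (hg _ hx)) (proj1 (hg _ hy)) gxy.
have [_ hr] := hedge' _ _ hx hy xy; apply: mixed_preimset.
by rewrite -(proj2 (hg _ hx)) -(proj2 (hg _ hy)) -hr.
Qed.

Lemma trace_dtrigraph d : is_d_trigraph d H -> is_d_trigraph d H'.
Proof.
move=> hd x hx; apply: leq_trans (trace_red_deg hx) _; apply: hd.
by case: htr => _ _ /(_ _ hx) [].
Qed.

Lemma trace_onto y : y \in tverts H -> f @^-1: p y != set0 ->
  exists2 x, x \in tverts H' & g x = y.
Proof.
case: htr => [[_ hdis _ _ _] [_ _ hcov _ _] hg] hy /set0Pn [w hw].
have [x hx hwx] := hcov w; exists x => //.
have [hgx hpx] := hg _ hx; apply/eqP/negPn/negP => gy.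
have := hdis _ _ hgx hy gy; rewrite -setI_eq0; apply/negP/set0Pn; exists (f w).
by rewrite inE; move: hwx hw; rewrite hpx !inE => -> ->.
Qed.

(* Since G' is non-empty, so is H'. *)
Lemma trace_single (w0 : gV G') : #|tverts H| = 1 -> #|tverts H'| = 1.
Proof.
move=> h1; apply/eqP; rewrite eqn_leq; apply/andP; split.
  rewrite -h1 -(card_in_imset trace_inj); apply: subset_leq_card.
  by apply/subsetP => _ /imsetP [x hx ->]; case: htr => _ _ /(_ _ hx) [].
case: htr => _ [_ _ hcov _ _] _; have [x hx _] := hcov w0.
by apply/card_gt0P; exists x.
Qed.

Variables (a b c : T).
Hypotheses (ha : a \in tverts H) (hb : b \in tverts H) (ab : a != b).
Hypothesis hc : c \notin tverts H :\ a :\ b.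

Lemma redirect_rest x : x \in tverts H' -> g x != a -> g x != b ->
  [/\ redirect g a b c x = g x, g x \in tverts (contract H a b c)
    & merge_parts p a b c (g x) = p (g x)].
Proof.
move=> hx gxa gxb; have [_ _ /(_ _ hx) [hgx _]] := htr.
have gW : g x \in tverts H :\ a :\ b by rewrite !inE gxa gxb.
rewrite /redirect /merge_parts (negbTE gxa) (negbTE gxb) /= in_setU1 gW orbT.
by rewrite ifN //; apply: contraNneq hc => <-.
Qed.

Lemma trace_contract_outside :
  (f @^-1: p a == set0) || (f @^-1: p b == set0) ->
  trace (contract H a b c) (merge_parts p a b c) H' p' (redirect g a b c).
Proof.
move=> hab; have [hH hH' hg] := htr; split => //; first exact: contract_quotient.
move=> x hx; have [hgx ex] := hg _ hx.
case: (boolP ((g x == a) || (g x == b))) => hgab; last first.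
  move: hgab; rewrite negb_or => /andP [gxa gxb].
  by case: (redirect_rest hx gxa gxb) => -> -> ->.
rewrite /redirect /merge_parts hgab /= !eqxx setU11; split => //.
have hne : f @^-1: p (g x) != set0 by rewrite -ex; case: hH' => + _ _ _ _; apply.
rewrite preimsetU ex.
by case/orP: hgab hab hne => /eqP -> /orP [] /eqP e0; rewrite ?e0 ?setU0 ?set0U ?eqxx.
Qed.

Lemma trace_contract_inside a' b' : a' \in tverts H' -> b' \in tverts H' ->
  g a' = a -> g b' = b ->
  trace (contract H a b c) (merge_parts p a b c)
        (contract H' a' b' a') (merge_parts p' a' b' a') (redirect g a b c).
Proof.
move=> ha' hb' ga' gb'; have [hH hH' hg] := htr.
have a'b' : a' != b' by apply: contra ab => /eqP e; rewrite -ga' -gb' e.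
split; [exact: contract_quotient|apply: contract_quotient => //|].
  by rewrite !inE eqxx andbF.
move=> x; rewrite /= in_setU1 => /orP [/eqP ->|].
  rewrite /redirect /merge_parts ga' !eqxx /= in_setU1 eqxx; split => //.
  by rewrite (proj2 (hg _ ha')) (proj2 (hg _ hb')) ga' gb' preimsetU.
move=> /setD1P [xb' /setD1P [xa' hx]].
have gxa : g x != a by rewrite -ga'; apply: contra xa' => /eqP /(trace_inj hx ha') ->.
have gxb : g x != b by rewrite -gb'; apply: contra xb' => /eqP /(trace_inj hx hb') ->.
have [-> hgx' ->] := redirect_rest hx gxa gxb.
by rewrite /merge_parts (negbTE xa'); split; [exact: hgx'|case: (hg _ hx)].
Qed.

End TraceFacts.

Lemma trace_seq d (w0 : gV G') s : forall H p H' p' g,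
  trace H p H' p' g -> contraction_seq d H s -> exists s', contraction_seq d H' s'.
Proof.
elim: s => [|[[a b] c] s IH] H p H' p' g htr /=.
  by move=> h1; exists [::]; apply: trace_single htr w0 h1.
case=> ha hb ab hc [hd hs].
case: (boolP ((f @^-1: p a != set0) && (f @^-1: p b != set0))); last first.
  rewrite negb_and !negbK => hab.
  exact: IH _ _ _ _ _ (trace_contract_outside htr ha hb hc hab) hs.
case/andP => /(trace_onto htr ha) [a' ha' ga'] /(trace_onto htr hb) [b' hb' gb'].
have htr1 := trace_contract_inside htr ha hb ab hc ha' hb' ga' gb'.
have a'b' : a' != b' by apply: contra ab => /eqP e; rewrite -ga' -gb' e.
have [s' hs'] := IH _ _ _ _ _ htr1 hs.
exists ((a', b', a') :: s'); split; rewrite ?inE ?eqxx ?andbF //.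
by split => //; apply: trace_dtrigraph htr1 _ hd.
Qed.

End InducedSubgraph.

Lemma induced_has_dseq (G G' : graph) (f : gV G' -> gV G) d (w0 : gV G') :
  (forall a b, gadj (f a) (f b) = gadj a b) -> injective f ->
  has_dseq G d -> has_dseq G' d.
Proof.
move=> f_adj finj [_ [s hs]]; split; first exact: graph_dtrigraph.
apply: (trace_seq f_adj w0 (H := graph_trigraph G) (p := fun x => [set x])
                    (p' := fun x => [set x]) (g := f) _ hs).
split; try exact: graph_quotient.
move=> x _; split => //; apply/setP => y; rewrite !inE.
by apply/eqP/eqP => [->|/finj].
Qed.

Lemma imsetD1_inj (T T' : finType) (f : T -> T') (A : {set T}) a :
  injective f -> f @: (A :\ a) = f @: A :\ f a.
Proof.
move=> finj; apply/setP => t; rewrite [in RHS]in_setD1; apply/imsetP/andP.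
  by case=> x /setD1P [xa hx] ->; rewrite (inj_eq finj) xa imset_f.
by case=> ta /imsetP [x hx ex]; exists x; rewrite // in_setD1 hx -(inj_eq finj) -ex ta.
Qed.

(* Transfer to a graph Gs in which every vertex v of G has been replaced by a
   module [module v], the vertices of a quotient of G being renamed by rho,
   next to extra "inert" vertices E with fixed parts qE: each inert part is
   homogeneous towards all modules, and inert parts are pairwise non-mixed. *)
Section ModuleSubstitution.
Variables (G Gs : graph) (T Ts : finType) (rho : T -> Ts).
Variables (module : gV G -> {set gV Gs}) (E : {set Ts}) (qE : Ts -> {set gV Gs}).
Hypothesis rho_inj : injective rho.
Hypothesis rho_notin_E : forall x, rho x \notin E.
Hypothesis module_adj : forall a b, a != b -> forall s t,
  s \in module a -> t \in module b -> gadj s t = gadj a b.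
Hypothesis inert_homogeneous : forall e, e \in E -> forall s s' v v' t t',
  s \in qE e -> s' \in qE e -> t \in module v -> t' \in module v' ->
  gadj s t = gadj s' t'.
Hypothesis inert_not_mixed : forall e e', e \in E -> e' \in E -> e != e' ->
  ~~ mixed (qE e) (qE e').

Definition modules (P : {set gV G}) : {set gV Gs} := \bigcup_(v in P) module v.

Lemma mixed_modules (P Q : {set gV G}) :
  [disjoint P & Q] -> mixed (modules P) (modules Q) -> mixed P Q.
Proof.
move=> hPQ /andP [/some_adjP [s [t [/bigcupP [a ha hs] /bigcupP [b hb ht] hst]]] hna].
have ab : a != b by apply: contraTneq hb => <-; rewrite (disjointFr hPQ ha).
apply/andP; split; first by apply/some_adjP; exists a, b; rewrite -(module_adj ab hs ht).
apply: contra hna => /fully_adjP hall; apply/fully_adjP.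
move=> s' t' /bigcupP [a' ha' hs'] /bigcupP [b' hb' ht'].
have a'b' : a' != b' by apply: contraTneq hb' => <-; rewrite (disjointFr hPQ ha').
by rewrite (module_adj a'b' hs' ht'); apply: hall.
Qed.

Lemma mixed_inert e (P : {set gV G}) : e \in E -> mixed (qE e) (modules P) = false.
Proof.
move=> he; apply/negbTE/negP => /andP [/some_adjP [s [t [hs /bigcupP [v _ ht] hst]]]].
apply/negP/negPn/fully_adjP => s' t' hs' /bigcupP [v' _ ht'].
by rewrite -(inert_homogeneous he hs hs' ht ht').
Qed.

Definition lift (H : trigraph T) (p : T -> {set gV G})
    (K : trigraph Ts) (q : Ts -> {set gV Gs}) :=
  [/\ is_quotient H p, is_quotient K q, tverts K = rho @: tverts H :|: E,
      {in tverts H, forall x, q (rho x) = modules (p x)}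
    & {in E, forall e, q e = qE e}].

Section LiftFacts.
Variables (H : trigraph T) (p : T -> {set gV G}).
Variables (K : trigraph Ts) (q : Ts -> {set gV Gs}).
Hypothesis hl : lift H p K q.

Lemma lift_red_deg x : x \in tverts H -> red_deg K (rho x) <= red_deg H x.
Proof.
move=> hx; case: hl => [[_ hdis _ hedge _] [_ _ _ hedgeK hloopK] hK hq hqE].
rewrite /red_deg -(card_imset _ rho_inj); apply: subset_leq_card.
apply/subsetP => t; rewrite inE => /andP [ht hrt].
have xt : rho x != t by apply: contraTneq hrt => <-; rewrite hloopK.
have hrx : rho x \in tverts K by rewrite hK inE imset_f.
have [_ e] := hedgeK _ _ hrx ht xt; rewrite e (hq _ hx) in hrt.
move: (ht); rewrite hK inE => /orP [/imsetP [y hy ety]|tE]; last first.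
  by rewrite (hqE _ tE) mixedC mixed_inert in hrt.
subst t; have xy : x != y by apply: contra xt => /eqP ->.
apply: imset_f; rewrite inE hy /=; have [_ ->] := hedge _ _ hx hy xy.
by apply: mixed_modules; [exact: hdis|rewrite -(hq _ hy)].
Qed.

Lemma lift_red_deg_inert e : e \in E -> red_deg K e = 0.
Proof.
move=> he; case: hl => [_ [_ _ _ hedgeK hloopK] hK hq hqE].
have heK : e \in tverts K by rewrite hK inE he orbT.
apply/eqP; rewrite cards_eq0; apply/eqP/setP => t; rewrite !inE.
apply/negbTE/negP => /andP [ht hrt].
have et : e != t by apply: contraTneq hrt => <-; rewrite hloopK.
have [_ e1] := hedgeK _ _ heK ht et; move: hrt; rewrite e1 (hqE _ he).
move: (ht); rewrite hK inE => /orP [/imsetP [y hy ->]|tE].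
  by rewrite (hq _ hy) mixed_inert.
by rewrite (hqE _ tE); apply/negP: (inert_not_mixed he tE et).
Qed.

Lemma lift_dtrigraph d : is_d_trigraph d H -> is_d_trigraph d K.
Proof.
move=> hd t; case: hl => _ _ -> _ _; rewrite inE => /orP [/imsetP [y hy ->]|tE].
  exact: leq_trans (lift_red_deg hy) (hd _ hy).
by rewrite lift_red_deg_inert.
Qed.

Lemma lift_fresh a b c : c \notin tverts H :\ a :\ b ->
  rho c \notin tverts K :\ rho a :\ rho b.
Proof.
case: hl => _ _ -> _ _; rewrite !inE !negb_and !negbK !(inj_eq rho_inj).
by rewrite (mem_imset _ _ rho_inj) (negbTE (rho_notin_E c)) orbF.
Qed.

Lemma lift_contract a b c :
  a \in tverts H -> b \in tverts H -> c \notin tverts H :\ a :\ b ->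
  lift (contract H a b c) (merge_parts p a b c)
       (contract K (rho a) (rho b) (rho c)) (merge_parts q (rho a) (rho b) (rho c)).
Proof.
move=> ha hb hc; have [hH hK hKv hq hqE] := hl.
have hra : rho a \in tverts K by rewrite hKv inE imset_f.
have hrb : rho b \in tverts K by rewrite hKv inE imset_f.
rewrite /merge_parts; split.
- exact: contract_quotient.
- exact: contract_quotient (lift_fresh hc).
- rewrite /= imsetU1 !imsetD1_inj // hKv; apply/setP => t.
  rewrite !inE; case: (boolP (t \in E)) => tE; last by rewrite !orbF.
  have tr x : t != rho x by apply: contraNneq (rho_notin_E x) => <-.
  by rewrite !tr !orbT.
- move=> x; rewrite /= in_setU1 (inj_eq rho_inj) => /orP [/eqP ->|hx].
    by rewrite eqxx (hq _ ha) (hq _ hb) /modules bigcup_setU.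
  have [hx' _ _ xc] := mem_contract_rest hc hx.
  by rewrite (negbTE xc); apply: hq.
- move=> e he; rewrite ifN; first exact: hqE.
  by apply: contraNneq (rho_notin_E c) => <-.
Qed.

Lemma lift_single : #|tverts H| = 1 ->
  exists w, tverts K = rho w |: E /\ q (rho w) = modules setT.
Proof.
move/eqP/cards1P => [w hw]; case: hl => [[_ _ hcov _ _] _ hK hq _].
exists w; rewrite hK hw imset_set1 hq ?hw ?inE //; split => //.
congr modules; apply/setP => v; rewrite inE.
by have [x] := hcov v; rewrite hw inE => /eqP ->.
Qed.

End LiftFacts.

Lemma lift_seq d s : forall H p K q, lift H p K q -> contraction_seq d H s ->
  exists s' H' p' K' q',
    [/\ reaches d K K' s', lift H' p' K' q' & #|tverts H'| = 1].
Proof.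
elim: s => [|[[a b] c] s IH] H p K q hl /=.
  by move=> h1; exists [::], H, p, K, q.
case=> ha hb ab hc [hd hs].
have hl1 := lift_contract hl ha hb hc.
have [s' [H' [p' [K' [q' [hr hl' h1]]]]]] := IH _ _ _ _ hl1 hs.
exists ((rho a, rho b, rho c) :: s'), H', p', K', q'; split => //=.
have [_ _ hKv _ _] := hl; have hfresh := lift_fresh hl hc.
have hK x : x \in tverts H -> rho x \in tverts K by rewrite hKv inE => /imset_f ->.
split; rewrite ?hK ?(inj_eq rho_inj) //.
by split => //; apply: lift_dtrigraph hl1 _ hd.
Qed.

End ModuleSubstitution.

Section Substitution.
Variables (G1 G2 : graph) (u : gV G1).
Local Notation S := (subst_graph G2 u).

(* G1 as an induced subgraph of S, u being represented by w. *)
Definition embed_G1 (w : gV G2) (x : gV G1) : gV S :=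
  if insub x is Some y then inl y else inr w.

Lemma embed_G1_inj w : injective (embed_G1 w).
Proof.
move=> x y; rewrite /embed_G1.
case: insubP => [x' _ <-|]; case: insubP => [y' _ <-|] //; first by case=> ->.
by rewrite !negbK => /eqP -> /eqP ->.
Qed.

Lemma embed_G1_adj w x y : gadj (embed_G1 w x) (embed_G1 w y) = gadj x y.
Proof.
rewrite /embed_G1; case: insubP => [x' _ <-|]; case: insubP => [y' _ <-|] //=.
- by rewrite negbK => /eqP ->.
- by rewrite negbK => /eqP ->.
- by rewrite !negbK => /eqP -> /eqP ->; rewrite !girr.
Qed.

Lemma inr_inj : injective (fun v : gV G2 => (inr v : gV S)).
Proof. by move=> a b []. Qed.

Lemma inr_adj (v v' : gV G2) : gadj (inr v : gV S) (inr v') = gadj v v'.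
Proof. by []. Qed.

Definition G1_rest : {set gV S} := [set t : gV S | if t is inl _ then true else false].
Definition G2_copy : {set gV S} :=
  modules (fun v : gV G2 => [set (inr v : gV S)]) setT.

Lemma embed_G1_image w : embed_G1 w @: setT = inr w |: G1_rest.
Proof.
apply/setP => -[y|v]; rewrite !inE /=.
  by apply/imsetP; exists (val y); rewrite // /embed_G1 valK.
rewrite orbF; apply/imsetP/eqP => [[x _]|[->]].
  by rewrite /embed_G1; case: insubP => // _ _ ->.
by exists u; rewrite // /embed_G1 insubF ?eqxx.
Qed.

(* S is G1 with u replaced by the module G2_copy. *)
Definition G1_module (x : gV G1) : {set gV S} :=
  if insub x is Some y then [set inl y] else G2_copy.

Lemma G1_module_adj a b : a != b -> forall s t,
  s \in G1_module a -> t \in G1_module b -> gadj s t = gadj a b.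
Proof.
rewrite /G1_module => ab s t.
case: insubP => [a' _ <-|]; case: insubP => [b' _ <-|].
- by rewrite !inE => /eqP -> /eqP ->.
- by rewrite negbK inE => /eqP -> /eqP -> /bigcupP [v _]; rewrite inE => /eqP ->.
- by rewrite negbK => /eqP -> /bigcupP [v _]; rewrite !inE => /eqP -> /eqP ->.
- by rewrite !negbK => /eqP ea /eqP eb; rewrite ea eb eqxx in ab.
Qed.

(* S is obtained from G2 by substituting singleton modules and adding the
   vertices of G1_rest as inert singletons. *)
Lemma G2_lift : lift (fun v : gV G2 => (inr v : gV S)) (fun v => [set (inr v : gV S)])
  G1_rest (fun e => [set e]) (graph_trigraph G2) (fun x => [set x])
  (graph_trigraph S) (fun x => [set x]).
Proof.
split; try exact: graph_quotient; last by [].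
  apply/setP => -[y|v]; rewrite !inE /= ?orbT ?orbF //.
  by apply/esym/imsetP; exists v.
by move=> x _; rewrite /modules big_set1.
Qed.

(* Contracting the copy of G2 along a d-sequence of G2 (the vertices of
   G1 - u are inert singletons) leaves a quotient of S made of G2_copy and
   the singletons of G1_rest. *)
Lemma contract_G2_copy d : has_dseq G2 d ->
  exists s K q w, [/\ reaches d (graph_trigraph S) K s, is_quotient K q,
    tverts K = inr w |: G1_rest, q (inr w) = G2_copy
    & {in G1_rest, forall e, q e = [set e]}].
Proof.
case=> _ [s hs].
have rho_rest v : (inr v : gV S) \notin G1_rest by rewrite inE.
have module_adj a b : a != b -> forall s0 t,
    s0 \in [set (inr a : gV S)] -> t \in [set inr b] -> gadj s0 t = gadj a b.
  by move=> _ s0 t; rewrite !inE => /eqP -> /eqP ->.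
have rest_homogeneous e : e \in G1_rest -> forall s0 s1 v v' t t',
    s0 \in [set e] -> s1 \in [set e] -> t \in [set (inr v : gV S)] ->
    t' \in [set inr v'] -> gadj s0 t = gadj s1 t'.
  move=> he s0 s1 v v' t t'; rewrite !inE => /eqP -> /eqP -> /eqP -> /eqP ->.
  by case: e he => [y|y]; rewrite inE.
have rest_not_mixed e e' : e \in G1_rest -> e' \in G1_rest -> e != e' ->
    ~~ mixed [set e] [set e'] by rewrite mixed1.
have [s' [H' [p' [K [q [hr hl' h1]]]]]] :=
  lift_seq inr_inj rho_rest module_adj rest_homogeneous rest_not_mixed
           G2_lift hs.
have [w [hK hqw]] := lift_single hl' h1; have [_ hq _ _ hqE] := hl'.
by exists s', K, q, w.
Qed.

(* What remains is a copy of G1, contracted along a d-sequence of G1. *)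
Lemma contract_G1_copy d K q w : has_dseq G1 d -> is_quotient K q ->
  tverts K = inr w |: G1_rest -> q (inr w) = G2_copy ->
  {in G1_rest, forall e, q e = [set e]} -> exists s, contraction_seq d K s.
Proof.
case=> _ [s hs] hq hK hqw hqE.
have hl : lift (embed_G1 w) G1_module set0 (fun _ => set0)
            (graph_trigraph G1) (fun x => [set x]) K q.
  split; [exact: graph_quotient|exact: hq|by rewrite hK setU0 embed_G1_image| |
          by move=> e; rewrite inE].
  move=> x _; rewrite /modules big_set1 /embed_G1 /G1_module.
  by case: insubP => [y _ _|_ //]; rewrite hqE // inE.
have no_inert x : embed_G1 w x \notin set0 by rewrite inE.
have [||s' [H' [p' [K' [q' [hr hl' h1]]]]]] :=
  lift_seq (@embed_G1_inj w) no_inert G1_module_adj _ _ hl hs;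
  try by move=> e; rewrite inE.
have [w' [hK' _]] := lift_single hl' h1.
exists (s' ++ [::]); apply: contraction_seq_cat hr _.
by rewrite /= hK' setU0 cards1.
Qed.

Lemma subst_has_dseq d : has_dseq G1 d -> has_dseq G2 d -> has_dseq S d.
Proof.
move=> h1 h2; split; first exact: graph_dtrigraph.
have [s [K [q [w [hr hq hK hqw hqE]]]]] := contract_G2_copy h2.
have [s' hs'] := contract_G1_copy h1 hq hK hqw hqE.
by exists (s ++ s'); apply: contraction_seq_cat hr hs'.
Qed.

End Substitution.

Theorem mainTheorem17 (G1 G2 : graph) (u : gV G1) :
  0 < #|gV G2| ->
  tww (subst_graph G2 u) = maxn (tww G1) (tww G2).
Proof.
move=> hG2; have /card_gt0P [w _] := hG2.
have hG1 : 0 < #|gV G1| by apply/card_gt0P; exists u.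
have hS : 0 < #|gV (subst_graph G2 u)| by apply/card_gt0P; exists (inr w).
have [dseq1 min1] := twwP hG1; have [dseq2 min2] := twwP hG2.
have [dseqS minS] := twwP hS.
apply/eqP; rewrite eqn_leq geq_max; apply/and3P; split.
- apply: minS; apply: subst_has_dseq.
    by apply: has_dseq_mono dseq1; rewrite leq_maxl.
  by apply: has_dseq_mono dseq2; rewrite leq_maxr.
- apply/min1/(@induced_has_dseq _ _ (@embed_G1 G1 G2 u w) _ u _ _ dseqS).
    exact: embed_G1_adj.
  exact: embed_G1_inj.
- apply/min2/(@induced_has_dseq (subst_graph G2 u) G2 inr _ w _ _ dseqS).
    exact: inr_adj.
  exact: inr_inj.
Qed.
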